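(* Let $(\mathbf{P},d_{\mathbf{P}})$ be a finite metric poset and let $M,N$ be $\mathbf{P}$-modules. Then \[ \mathrm{dist}_{\mathrm{B}}\bigl(K^M_\bullet,K^N_\bullet\bigr)\ \le\ d^{\mathrm{Int}\overline{\mathbf{P}}}_{\mathrm{GT}}\bigl(K(M),K(N)\bigr)\ \le\ d^{\mathbf{P}}_{\mathrm{GT}}(M,N), \] where $K^M_\bullet$ and $K^N_\bullet$ are minimal projective resolutions of $K(M)$ and $K(N)$ in $\mathrm{vect}^{\mathrm{Int}\overline{\mathbf{P}}}$, and $\mathrm{dist}_{\mathrm{B}}$ is computed over the finite (extended) metric poset $(\mathrm{Int}\overline{\mathbf{P}},d_{\mathrm{Int}\overline{\mathbf{P}}})$.
   Context: Fix a field $k$; $\mathrm{vect}$ is the category of finite-dimensional $k$-vector spaces. Finite posets are categories with a unique morphism $x\to y$ iff $x\le y$; for a finite poset $\mathbf{S}$, an $\mathbf{S}$-module is a functor $\mathbf{S}\to\mathrm{vect}$, forming $\mathrm{vect}^{\mathbf{S}}$. For monotone $g$, $g^*$ is precomposition with $g$. A finite (extended) metric poset is a finite poset $\mathbf{S}$ with a (possibly extended, $[0,\infty]$-valued) metric $d_{\mathbf{S}}$. Augmentation and intervals: $\overline{\mathbf{P}}=\mathbf{P}\sqcup\{\top\}$ with $x<\top$ for all $x\in\mathbf{P}$; $d_{\overline{\mathbf{P}}}$ extends $d_{\mathbf{P}}$ by $d(x,\top)=d(\top,x)=\infty$ for $x\ne\top$, $d(\top,\top)=0$. For a finite poset $\mathbf{S}$,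 $\mathrm{Int}\,\mathbf{S}=\{(x,y)\in\mathbf{S}\times\mathbf{S}\mid x\le y\}$ with the product order and metric $d_{\mathrm{Int}\mathbf{S}}((x_1,y_1),(x_2,y_2))=\max\{d_{\mathbf{S}}(x_1,x_2),d_{\mathbf{S}}(y_1,y_2)\}$. For $M\in\mathrm{vect}^{\mathbf{P}}$, $\overline{M}\in\mathrm{vect}^{\overline{\mathbf{P}}}$ extends $M$ by $\overline{M}(\top)=0$. The kernel module $K(M)\in\mathrm{vect}^{\mathrm{Int}\overline{\mathbf{P}}}$ is $K(M)((x,y))=\ker\overline{M}(x\le y)$, with structure map for $(x_1,y_1)\le(x_2,y_2)$ the restriction of $\overline{M}(x_1\le x_2)$. Galois transport: a Galois insertion $f:\mathbf{Q}\rightleftarrows\mathbf{S}:g$ consists of monotone $f,g$ with $f(u)\le x\iff u\le g(x)$ and $f\circ g=\mathrm{id}_{\mathbf{S}}$. A Galois coupling of $(M,N)$ ($M,N\in\mathrm{vect}^{\mathbf{S}}$) is $(\mathbf{Q},f\dashv g,h\dashv i,\Gamma)$ with $\mathbf{Q}$ a finite poset, $f:\mathbf{Q}\rightleftarrows\mathbf{S}:g$, $h:\mathbf{Q}\rightleftarrows\mathbf{S}:i$ Galois insertions, $\Gamma\in\mathrm{vect}^{\mathbf{Q}}$, $g^*\Gamma\cong M$, $i^*\Gamma\cong N$; cost $=\sup_{q\in\mathbf{Q}}d_{\mathbf{S}}(f(q),h(q))$. $d^{\mathbf{S}}_{\mathrm{GT}}(M,N)$ is the infimum of costs of couplings ($\infty$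 if none). Bottleneck distance over $\mathbf{S}$: $k[\mathbf{S}]_x$ ($x\in\mathbf{S}$) is the module with value $k$ at $y\ge x$, $0$ elsewhere, identity maps; these are the indecomposable projectives. For $y\le x$, $\rho(x\ge y):k[\mathbf{S}]_x\to k[\mathbf{S}]_y$ is the canonical nonzero morphism (identity at each $z\ge x$), and $\rho(x\ge y)=0$ otherwise. A morphism between projectives $E=\bigoplus_{x\in\mathrm{smd}(E)}k[\mathbf{S}]_x\to F=\bigoplus_{y\in\mathrm{smd}(F)}k[\mathbf{S}]_y$ (given decompositions) is uniquely $[a_{x,y}\rho(x\ge y)]$ with $a_{x,y}\in k$, $a_{x,y}=0$ unless $x\ge y$; $\mathrm{Mat}$ is $[a_{x,y}]$. Projective resolutions $E_\bullet=(E_i,\partial_i:E_{i+1}\to E_i)_{i\ge0}$ are taken with fixed decompositions of each $E_i$; $|E_i|$ = number of summands. $\mathsf{Res}(P^M_\bullet,P^N_\bullet)$ = pairs of projective resolutions $(E_\bullet,F_\bullet)$ of $M,N$ with $|E_i|=|F_i|$ for all $i$. A matching is a family of bijections $B_i:\mathrm{smd}(E_i)\to\mathrm{smd}(F_i)$ with the $(x',x)$-entry of $\mathrm{Mat}(\partial^E_i)$ equal to the $(B_{i+1}(x'),B_i(x))$-entry of $\mathrm{Mat}(\partial^F_i)$ for all $i$, $x\in\mathrm{smd}(E_i)$, $x'\in\mathrm{smd}(E_{i+1})$; cost $=\sup_{i,x}d_{\mathbf{S}}(x,B_i(x))$. $\mathrm{dist}_{\mathrm{R}}(E_\bullet,F_\bullet)$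 = inf cost over matchings ($\infty$ if none); $\mathrm{dist}_{\mathrm{B}}(P^M_\bullet,P^N_\bullet)$ = inf of $\mathrm{dist}_{\mathrm{R}}$ over $\mathsf{Res}(P^M_\bullet,P^N_\bullet)$ ($\infty$ if empty), where $P^M_\bullet$ is a minimal projective resolution. *)

From HB Require Import structures.
From mathcomp Require Import all_boot all_order all_algebra.
From mathcomp Require Import classical_sets reals constructive_ereal ereal.

Set Implicit Arguments.
Unset Strict Implicit.
Unset Printing Implicit Defensive.

Import Order.TTheory GRing.Theory Num.Theory.
Local Open Scope ring_scope.

Record finPoset := FinPoset {
  pcar :> finType;
  ple : rel pcar;
  ple_refl : reflexive ple;
  ple_anti : antisymmetric ple;
  ple_trans : transitive ple }.

Definition monotone (Q S : finPoset) (f : Q -> S) :=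
  forall u v : Q, ple u v -> ple (f u) (f v).

Definition galois_ins (Q S : finPoset) (f : Q -> S) (g : S -> Q) :=
  [/\ monotone f, monotone g,
      (forall (u : Q) (x : S), ple (f u) x = ple u (g x))
    & (forall x : S, f (g x) = x)].

(* Augmentation  P-bar = P + {top}, top encoded as None. *)
Definition aug_le (P : finPoset) (a b : option P) : bool :=
  match a, b with
  | Some x, Some y => ple x y
  | _, None => true
  | None, Some _ => false
  end.

Lemma aug_le_refl (P : finPoset) : reflexive (@aug_le P).
Proof. by case=> //= x; apply: ple_refl. Qed.

Lemma aug_le_anti (P : finPoset) : antisymmetric (@aug_le P).
Proof.
case=> [x|] [y|] //= h.
by rewrite (ple_anti h).
Qed.

Lemma aug_le_trans (P : finPoset) : transitive (@aug_le P).
Proof.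
case=> [y|] [x|] [z|] //=; exact: ple_trans.
Qed.

Definition augP (P : finPoset) : finPoset :=
  @FinPoset (option P : finType) (@aug_le P)
    (@aug_le_refl P) (@aug_le_anti P) (@aug_le_trans P).

Definition int_car (S : finPoset) : finType := {p : S * S | ple p.1 p.2}.

Definition int_le (S : finPoset) (a b : int_car S) : bool :=
  ple (val a).1 (val b).1 && ple (val a).2 (val b).2.

Lemma int_le_refl (S : finPoset) : reflexive (@int_le S).
Proof. by move=> a; rewrite /int_le !ple_refl. Qed.

Lemma int_le_anti (S : finPoset) : antisymmetric (@int_le S).
Proof.
move=> [[x1 y1] h1] [[x2 y2] h2]; rewrite /int_le /=.
case/andP=> /andP[a b] /andP[c e]; apply: val_inj => /=.
by rewrite (ple_anti (introT andP (conj a c))) (ple_anti (introT andP (conj b e))).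
Qed.

Lemma int_le_trans (S : finPoset) : transitive (@int_le S).
Proof.
move=> b a c; rewrite /int_le => /andP[h1 h2] /andP[h3 h4].
by rewrite (ple_trans h1 h3) (ple_trans h2 h4).
Qed.

Definition intP (S : finPoset) : finPoset :=
  @FinPoset (int_car S) (@int_le S)
    (@int_le_refl S) (@int_le_anti S) (@int_le_trans S).

Section Metrics.
Variable R : realType.
Local Open Scope ereal_scope.

Definition aug_d (P : finPoset) (d : P -> P -> \bar R) (a b : augP P) : \bar R :=
  match a, b with
  | Some x, Some y => d x y
  | None, None => 0
  | _, _ => +oo
  end.

Definition int_d (S : finPoset) (d : S -> S -> \bar R) (a b : intP S) : \bar R :=
  maxe (d (val a).1 (val b).1) (d (val a).2 (val b).2).

Definition is_metric (S : finPoset) (d : S -> S -> \bar R) :=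
  [/\ forall x y, d x y = 0 <-> x = y,
      forall x y, d x y = d y x
    & forall x y z, d x z <= d x y + d y z].

End Metrics.

(* S-modules: functors S -> vect, as dimensions + matrices.             *)
(* Row-vector convention: M(x <= y) acts by v |-> v *m pmap M x y.      *)
(* pmap M x y is only meaningful when x <= y.                           *)
Section Modules.
Variable F : fieldType.

Record pmod (S : finPoset) := PMod {
  pdim : S -> nat;
  pmap : forall x y : S, 'M[F]_(pdim x, pdim y) }.

Definition is_pmod (S : finPoset) (M : pmod S) :=
  (forall x : S, pmap M x x = 1%:M) /\
  (forall x y z : S, ple x y -> ple y z ->
     pmap M x z = pmap M x y *m pmap M y z).

Definition pmod_iso (S : finPoset) (M N : pmod S) :=
  exists (phi : forall x, 'M[F]_(pdim M x, pdim N x))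
         (psi : forall x, 'M[F]_(pdim N x, pdim M x)),
    [/\ forall x, phi x *m psi x = 1%:M,
        forall x, psi x *m phi x = 1%:M
      & forall x y, ple x y -> pmap M x y *m phi y = phi x *m pmap N x y].

Definition pullback (Q S : finPoset) (g : Q -> S) (M : pmod S) : pmod Q :=
  @PMod Q (fun u => pdim M (g u)) (fun u v => pmap M (g u) (g v)).

Definition aug_dim (P : finPoset) (M : pmod P) (a : augP P) : nat :=
  if a is Some x then pdim M x else 0%N.

Definition aug_map (P : finPoset) (M : pmod P) (a b : augP P) :
    'M[F]_(aug_dim M a, aug_dim M b) :=
  match a as a0, b as b0 return 'M[F]_(aug_dim M a0, aug_dim M b0) with
  | Some x, Some y => pmap M x y
  | _, _ => 0
  end.

Definition aug_mod (P : finPoset) (M : pmod P) : pmod (augP P) :=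
  @PMod (augP P) (aug_dim M) (aug_map M).

(* Kernel module K(M) over Int P-bar: K(M)(x,y) = ker M-bar(x <= y)
   (a chosen basis of the left kernel), structure maps = restrictions
   of M-bar(x1 <= x2). *)
Definition kmat (P : finPoset) (M : pmod P) (p : intP (augP P)) :=
  pmap (aug_mod M) (val p).1 (val p).2.

Definition kdim (P : finPoset) (M : pmod P) (p : intP (augP P)) : nat :=
  \rank (kermx (kmat M p)).

Definition kbasis (P : finPoset) (M : pmod P) (p : intP (augP P)) :
    'M[F]_(kdim M p, aug_dim M (val p).1) :=
  row_base (kermx (kmat M p)).

Definition kermod (P : finPoset) (M : pmod P) : pmod (intP (augP P)) :=
  @PMod (intP (augP P)) (kdim M)
    (fun p q => kbasis M p *m pmap (aug_mod M) (val p).1 (val q).1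
                  *m pinvmx (kbasis M q)).

Variable R : realType.
Local Open Scope ereal_scope.

Definition coupling_cost (Q S : finPoset) (d : S -> S -> \bar R)
    (f h : Q -> S) : \bar R :=
  \big[maxe/0]_(q : Q) d (f q) (h q).

Definition dGT (S : finPoset) (d : S -> S -> \bar R) (M N : pmod S) : \bar R :=
  ereal_inf [set c | exists (Q : finPoset) (f : Q -> S) (g : S -> Q)
                            (h : Q -> S) (i : S -> Q) (G : pmod Q),
     [/\ galois_ins f g, galois_ins h i, is_pmod G,
         pmod_iso (pullback g G) M /\ pmod_iso (pullback i G) N
       & c = coupling_cost d f h]].

(* A projective E = (+)_{j} k[S]_{s_j} is given by the sequence s of     *)
(* its summand labels; E(z) is the span of the e_j with s_j <= z inside  *)
(* F^(size s), i.e. the row space of diag_at s z; structure maps are the *)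
(* inclusions.  A morphism (+) k[S]_{s_j} -> (+) k[S]_{t_k} is its       *)
(* matrix Mat = [a_{jk}] with a_{jk} = 0 unless t_k <= s_j.              *)
(* The augmentation E_0 -> M is given (Yoneda) by vectors m_j in M(s_j). *)
Definition lab (S : finPoset) (s : seq S) (j : 'I_(size s)) : S :=
  tnth (in_tuple s) j.

Definition diag_at (S : finPoset) (s : seq S) (z : S) : 'M[F]_(size s) :=
  diag_mx (\row_j (ple (lab j) z)%:R).

Record presol (S : finPoset) (M : pmod S) := PRes {
  rE : nat -> seq S;
  rd : forall i, 'M[F]_(size (rE i.+1), size (rE i));
  reps : forall j : 'I_(size (rE 0)), 'rV[F]_(pdim M (lab j)) }.
Arguments reps [S M] p j.
Arguments rd [S M] p i.
Arguments rE [S M] p i.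

Definition eps_at (S : finPoset) (M : pmod S) (E : presol M) (z : S) :
    'M[F]_(size (rE E 0), pdim M z) :=
  \matrix_(j, k) (if ple (lab j) z then (reps E j *m pmap M (lab j) z) ord0 k
                  else 0%R).

Definition is_resolution (S : finPoset) (M : pmod S) (E : presol M) :=
  [/\ (* each differential is a morphism of projectives *)
      forall i (j : 'I_(size (rE E i.+1))) (k : 'I_(size (rE E i))),
        rd E i j k != 0%R -> ple (lab k) (lab j),
      forall z, row_full (eps_at E z),
      (* exactness at E_0 *)
      forall z, (diag_at (rE E 1) z *m rd E 0
                  == diag_at (rE E 0) z :&: kermx (eps_at E z))%MS
    & (* exactness at E_{i+1} *)
      forall i z, (diag_at (rE E i.+2) z *m rd E i.+1
                  == diag_at (rE E i.+1) z :&: kermx (rd E i))%MS].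

Definition is_matching (S : finPoset) (M N : pmod S) (E : presol M) (G : presol N)
    (B : forall i, 'I_(size (rE E i)) -> 'I_(size (rE G i))) :=
  (forall i, bijective (B i)) /\
  (forall i (j' : 'I_(size (rE E i.+1))) (j : 'I_(size (rE E i))),
      rd E i j' j = rd G i (B i.+1 j') (B i j)).

Definition matching_cost (S : finPoset) (d : S -> S -> \bar R) (M N : pmod S)
    (E : presol M) (G : presol N)
    (B : forall i, 'I_(size (rE E i)) -> 'I_(size (rE G i))) : \bar R :=
  ereal_sup ([set 0] `|`
    [set c | exists i (j : 'I_(size (rE E i))), c = d (lab j) (lab (B i j))]).

Definition distR (S : finPoset) (d : S -> S -> \bar R) (M N : pmod S)
    (E : presol M) (G : presol N) : \bar R :=
  ereal_inf [set c | exists B : forall i, 'I_(size (rE E i)) -> 'I_(size (rE G i)),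
     is_matching B /\ c = matching_cost d B].

Definition distB (S : finPoset) (d : S -> S -> \bar R) (M N : pmod S) : \bar R :=
  ereal_inf [set c | exists (E : presol M) (G : presol N),
     [/\ is_resolution E, is_resolution G,
         (forall i, size (rE E i) = size (rE G i))
       & c = distR d E G]].

End Modules.

From Pilot Require Import Defs.
From HB Require Import structures.
From mathcomp Require Import all_boot all_order all_algebra.
From mathcomp Require Import classical_sets reals constructive_ereal ereal.

(* Both inequalities come from transporting Galois couplings.  A coupling
   (Q, f -| g, h -| i, Γ) of M and N is carried first by augmentation and then by
   the interval construction to a coupling (Int Q̄, ..., K(Γ)) of K(M) and K(N);
   the kernel construction commutes with pullbacks, and the interval metric is a
   maximum of distances of endpoints, so the cost does not grow.
   For the first inequality, resolve Γ by projectives over Q.  Since f -| g,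
   pulling back along g is exact and sends k[Q]_q to k[S]_(f q), so the resolution
   of Γ becomes a resolution of M ≅ g^*Γ with summands relabelled by f, and
   likewise one of N relabelled by h, with the same matrices.  Matching each
   summand with its twin costs at most sup_q d(f q, h q). *)

Set Implicit Arguments.
Unset Strict Implicit.
Unset Printing Implicit Defensive.
Import Order.TTheory GRing.Theory Num.Theory.
(* Makes [intP] refer to the interval poset again, not to ssrint's [intP]. *)
Import Defs.
Local Open Scope ring_scope.

Section MatrixFacts.
Variable F : fieldType.

Lemma thinmx_eq m (A B : 'M[F]_(m, 0)) : A = B.
Proof. by rewrite [A]thinmx0 [B]thinmx0. Qed.

Lemma kermx_base_transport m n m' n' (A : 'M[F]_(m, n)) (B : 'M_(m', n'))
    (a : 'M_(m, m')) (b : 'M_(n, n')) :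
  A *m b = a *m B -> (row_base (kermx A) *m a <= row_base (kermx B))%MS.
Proof.
move=> comm; rewrite (eqmxMr _ (eq_row_base _)) eq_row_base; apply/sub_kermxP.
by rewrite -mulmxA -comm mulmxA mulmx_ker mul0mx.
Qed.

Lemma row_castmx m m' n (e : m = m') (A : 'M[F]_(m, n)) i :
  row i (castmx (e, erefl n) A) = row (cast_ord (esym e) i) A.
Proof. by apply/rowP=> k; rewrite !mxE castmxE cast_ord_id. Qed.

Lemma mulmxKpV_mulmx m1 m2 n p q (U : 'M[F]_(m1, n)) (B : 'M_(m2, n))
    (Y : 'M_(n, p)) (Z : 'M_(p, q)) :
  (U <= B)%MS -> U *m pinvmx B *m (B *m Y *m Z) = U *m Y *m Z.
Proof. by move=> sUB; rewrite (mulmxA _ (B *m Y)) (mulmxA _ B) mulmxKpV. Qed.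

Lemma kermxMfree m n p (A : 'M[F]_(m, n)) (B : 'M_(n, p)) :
  row_free B -> (kermx (A *m B) :=: kermx A)%MS.
Proof.
move=> freeB; apply/eqmxP/andP; split; apply/sub_kermxP.
  by apply: (row_free_inj freeB); rewrite mul0mx -mulmxA mulmx_ker.
by rewrite mulmxA mulmx_ker mul0mx.
Qed.

Lemma exact_castmx n0 n0' n1 n1' p p' (e0 : n0 = n0') (e1 : n1 = n1') (ep : p = p')
    (D1 : 'M[F]_n1) (d : 'M_(n1, n0)) (D0 : 'M_n0) (X : 'M_(n0, p)) :
  (D1 *m d == D0 :&: kermx X)%MS ->
  (castmx (e1, e1) D1 *m castmx (e1, e0) d
     == castmx (e0, e0) D0 :&: kermx (castmx (e0, ep) X))%MS.
Proof. by case: n0' / e0; case: n1' / e1; case: p' / ep; rewrite !castmx_id. Qed.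

End MatrixFacts.

Definition aug_lift (Q S : finPoset) (f : Q -> S) : augP Q -> augP S := omap f.

Lemma aug_lift_monotone (Q S : finPoset) (f : Q -> S) :
  monotone f -> monotone (aug_lift f).
Proof. by move=> hf [x|] [y|] //= /hf. Qed.

Lemma galois_ins_aug (Q S : finPoset) (f : Q -> S) g :
  galois_ins f g -> galois_ins (aug_lift f) (aug_lift g).
Proof.
case=> hf hg adj fgK; split; try exact: aug_lift_monotone.
  by case=> [u|] [x|] //=; rewrite adj.
by case=> [x|] //=; rewrite fgK.
Qed.

Definition int_map (Q S : finPoset) (f : Q -> S) (mf : monotone f) (p : intP Q) : intP S :=
  exist (fun x : S * S => ple x.1 x.2) (f (val p).1, f (val p).2) (mf _ _ (valP p)).

Lemma galois_ins_int (Q S : finPoset) (f : Q -> S) g (mf : monotone f) (mg : monotone g) :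
  galois_ins f g -> galois_ins (int_map mf) (int_map mg).
Proof.
case=> _ _ adj fgK; split.
- by move=> u v /andP[le1 le2]; apply/andP; split; apply: mf.
- by move=> u v /andP[le1 le2]; apply/andP; split; apply: mg.
- by move=> u x; rewrite /= /int_le /= !adj.
- by move=> x; apply: val_inj; rewrite /= !fgK; case: (val x).
Qed.

Section ModuleLifts.
Variable F : fieldType.

Definition pmod_morph (S : finPoset) (X Y : pmod F S)
    (phi : forall x, 'M[F]_(pdim X x, pdim Y x)) :=
  forall x y, ple x y -> pmap X x y *m phi y = phi x *m pmap Y x y.

Lemma pmod_morph_inv (S : finPoset) (X Y : pmod F S)
    (phi : forall x, 'M[F]_(pdim X x, pdim Y x))
    (psi : forall x, 'M[F]_(pdim Y x, pdim X x)) :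
  pmod_morph phi -> (forall x, phi x *m psi x = 1%:M) ->
  (forall x, psi x *m phi x = 1%:M) -> pmod_morph psi.
Proof.
move=> phiM phiK psiK x y lexy.
rewrite -[psi x *m _]mulmx1 -(phiK y) mulmxA -(mulmxA (psi x)) phiM //.
by rewrite !mulmxA psiK mul1mx.
Qed.

Lemma pullback_pmod (Q S : finPoset) (g : S -> Q) (X : pmod F Q) :
  monotone g -> is_pmod X -> is_pmod (pullback g X).
Proof.
move=> hg [X1 XM]; split=> [x|x y z lexy leyz]; first exact: X1.
by apply: XM; apply: hg.
Qed.

Lemma aug_mod_pmod (P : finPoset) (X : pmod F P) : is_pmod X -> is_pmod (aug_mod X).
Proof.
case=> X1 XM; split; first by case=> [x|]; [exact: X1 | exact: thinmx_eq].
by case=> [x|] [y|] [z|] //= lexy leyz; [exact: XM | exact: thinmx_eq ..].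
Qed.

Lemma aug_mod_iso (Q S : finPoset) (g : S -> Q) (G : pmod F Q) (M : pmod F S) :
  pmod_iso (pullback g G) M ->
  pmod_iso (pullback (aug_lift g) (aug_mod G)) (aug_mod M).
Proof.
move=> [phi [psi [phiK psiK phiM]]].
exists (fun a => if a is Some x return 'M_(aug_dim G (aug_lift g a), aug_dim M a)
                 then phi x else 0).
exists (fun a => if a is Some x return 'M_(aug_dim M a, aug_dim G (aug_lift g a))
                 then psi x else 0).
split; first by case=> [x|]; [exact: phiK | exact: thinmx_eq].
  by case=> [x|]; [exact: psiK | exact: thinmx_eq].
by case=> [x|] [y|] //= lexy; [exact: phiM | exact: thinmx_eq ..].
Qed.

Section KernelModule.
Variable S : finPoset.

Definition kerbase (X : pmod F S) (p : intP S) :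
    'M[F]_(\rank (kermx (pmap X (val p).1 (val p).2)), pdim X (val p).1) :=
  row_base (kermx (pmap X (val p).1 (val p).2)).

Definition kernel_mod (X : pmod F S) : pmod F (intP S) :=
  @PMod F (intP S) (fun p => \rank (kermx (pmap X (val p).1 (val p).2)))
    (fun p q => kerbase X p *m pmap X (val p).1 (val q).1 *m pinvmx (kerbase X q)).

Definition kermap (X Y : pmod F S) (phi : forall x, 'M[F]_(pdim X x, pdim Y x))
    (p : intP S) : 'M_(pdim (kernel_mod X) p, pdim (kernel_mod Y) p) :=
  kerbase X p *m phi (val p).1 *m pinvmx (kerbase Y p).

Lemma kerbase_mul_sub (X : pmod F S) p q :
  is_pmod X -> ple p q -> (kerbase X p *m pmap X (val p).1 (val q).1 <= kerbase X q)%MS.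
Proof.
move=> [_ XM] /andP[le1 le2]; apply: kermx_base_transport.
by rewrite -(XM _ _ _ le1 (valP q)) (XM _ _ _ (valP p) le2).
Qed.

Lemma kernel_mod_pmod (X : pmod F S) : is_pmod X -> is_pmod (kernel_mod X).
Proof.
move=> HX; split=> [p|p q r lepq leqr] /=.
  by rewrite HX.1 mulmx1 mulmxVp ?row_base_free.
rewrite mulmxKpV_mulmx ?kerbase_mul_sub //.
case/andP: lepq => lepq1 _; case/andP: leqr => leqr1 _.
by rewrite (HX.2 _ _ _ lepq1 leqr1) !mulmxA.
Qed.

Section KernelMap.
Variables (X Y : pmod F S) (phi : forall x, 'M[F]_(pdim X x, pdim Y x)).
Hypothesis phiM : pmod_morph phi.

Lemma kerbase_morph_sub p : (kerbase X p *m phi (val p).1 <= kerbase Y p)%MS.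
Proof. exact/kermx_base_transport/phiM/(valP p). Qed.

Lemma kermapK (psi : forall x, 'M[F]_(pdim Y x, pdim X x)) p :
  pmod_morph psi -> (forall x, phi x *m psi x = 1%:M) ->
  kermap phi p *m kermap psi p = 1%:M.
Proof.
move=> psiM phiK; rewrite /kermap mulmxKpV_mulmx ?kerbase_morph_sub //.
by rewrite -2!mulmxA (mulmxA (phi _)) phiK mul1mx mulmxVp ?row_base_free.
Qed.

Lemma kermap_morph : is_pmod X -> pmod_morph (kermap phi).
Proof.
move=> HX p q /[dup] lepq /andP[le1 _] /=; rewrite /kermap.
rewrite mulmxKpV_mulmx ?kerbase_mul_sub // mulmxKpV_mulmx ?kerbase_morph_sub //.
by rewrite -(mulmxA (kerbase X p)) (phiM le1) mulmxA.
Qed.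

End KernelMap.

Lemma kernel_mod_iso (X Y : pmod F S) :
  is_pmod X -> pmod_iso X Y -> pmod_iso (kernel_mod X) (kernel_mod Y).
Proof.
move=> HX [phi [psi [phiK psiK phiM]]].
have psiM := pmod_morph_inv phiM phiK psiK.
exists (kermap phi), (kermap psi).
by split=> [p|p|]; [exact: kermapK | exact: kermapK | exact: kermap_morph].
Qed.

End KernelModule.

Lemma kermodE (P : finPoset) (M : pmod F P) : kermod M = kernel_mod (aug_mod M).
Proof. by []. Qed.

End ModuleLifts.

Section Couplings.
Variables (F : fieldType) (R : realType).
Local Open Scope ereal_scope.

Definition is_coupling (S Q : finPoset) (M N : pmod F S) (f : Q -> S) (g : S -> Q)
    (h : Q -> S) (i : S -> Q) (G : pmod F Q) :=
  [/\ galois_ins f g, galois_ins h i, is_pmod G,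
      pmod_iso (pullback g G) M & pmod_iso (pullback i G) N].

Lemma dGT_le_cost (S Q : finPoset) (d : S -> S -> \bar R) (M N : pmod F S)
    (f : Q -> S) g h i G :
  is_coupling M N f g h i G -> dGT d M N <= coupling_cost d f h.
Proof.
case=> fg hi HG isoM isoN; apply: ereal_inf_lbound.
by exists Q, f, g, h, i, G; split.
Qed.

Lemma le_dGT (S : finPoset) (d : S -> S -> \bar R) (M N : pmod F S) (e : \bar R) :
  (forall (Q : finPoset) (f : Q -> S) g h i G,
     is_coupling M N f g h i G -> e <= coupling_cost d f h) ->
  e <= dGT d M N.
Proof.
move=> costP.
apply: le_ereal_inf_tmp => _ [Q [f [g [h [i [G [fg hi HG [isoM isoN] ->]]]]]]].
by apply: (costP Q f g h i G); split.
Qed.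

Lemma coupling_cost_ge0 (Q S : finPoset) (d : S -> S -> \bar R) (f h : Q -> S) :
  0 <= coupling_cost d f h.
Proof. exact: bigmax_ge_id. Qed.

Lemma le_coupling_cost (Q S : finPoset) (d : S -> S -> \bar R) (f h : Q -> S) q :
  d (f q) (h q) <= coupling_cost d f h.
Proof. exact: (le_bigmax 0 (fun q => d (f q) (h q))). Qed.

Lemma coupling_cost_aug (Q S : finPoset) (d : S -> S -> \bar R) (f h : Q -> S) :
  coupling_cost (aug_d d) (aug_lift f) (aug_lift h) <= coupling_cost d f h.
Proof.
apply/bigmax_leP; split=> [|[q|] _]; rewrite ?coupling_cost_ge0 //.
exact: le_coupling_cost.
Qed.

Lemma coupling_cost_int (Q S : finPoset) (d : S -> S -> \bar R) (f h : Q -> S)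
    (mf : monotone f) (mh : monotone h) :
  coupling_cost (int_d d) (int_map mf) (int_map mh) <= coupling_cost d f h.
Proof.
apply/bigmax_leP; split=> [|p _]; first exact: coupling_cost_ge0.
by rewrite /int_d ge_max !le_coupling_cost.
Qed.

Lemma coupling_aug (S Q : finPoset) (M N : pmod F S) (f : Q -> S) g h i G :
  is_coupling M N f g h i G ->
  is_coupling (aug_mod M) (aug_mod N) (aug_lift f) (aug_lift g)
    (aug_lift h) (aug_lift i) (aug_mod G).
Proof.
case=> fg hi HG isoM isoN.
split; [exact: galois_ins_aug | exact: galois_ins_aug | exact: aug_mod_pmod | |];
  exact: aug_mod_iso.
Qed.

Lemma coupling_kernel (S Q : finPoset) (X Y : pmod F S) (f : Q -> S) g h i G
    (mf : monotone f) (mg : monotone g) (mh : monotone h) (mi : monotone i) :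
  is_coupling X Y f g h i G ->
  is_coupling (kernel_mod X) (kernel_mod Y) (int_map mf) (int_map mg)
    (int_map mh) (int_map mi) (kernel_mod G).
Proof.
case=> fg hi HG isoX isoY.
(* [pullback (int_map mg) (kernel_mod G)] is convertible to [kernel_mod (pullback g G)]. *)
split; [exact: galois_ins_int | exact: galois_ins_int | exact: kernel_mod_pmod | |].
  exact: kernel_mod_iso (pullback_pmod mg HG) isoX.
exact: kernel_mod_iso (pullback_pmod mi HG) isoY.
Qed.

Lemma dGT_aug_le (S : finPoset) (d : S -> S -> \bar R) (M N : pmod F S) :
  dGT (aug_d d) (aug_mod M) (aug_mod N) <= dGT d M N.
Proof.
apply: le_dGT => Q f g h i G cMN.
exact: le_trans (dGT_le_cost _ (coupling_aug cMN)) (coupling_cost_aug _ _ _).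
Qed.

Lemma dGT_kernel_le (S : finPoset) (d : S -> S -> \bar R) (X Y : pmod F S) :
  dGT (int_d d) (kernel_mod X) (kernel_mod Y) <= dGT d X Y.
Proof.
apply: le_dGT => Q f g h i G cXY.
have [[mf mg _ _] [mh mi _ _] _ _ _] := cXY.
exact: le_trans (dGT_le_cost _ (coupling_kernel mf mg mh mi cXY))
                (coupling_cost_int _ _ _).
Qed.

End Couplings.

Section Resolutions.
Variable F : fieldType.

Section DiagAt.
Variable S : finPoset.

Lemma row_diag_atM (s : seq S) z m (A : 'M[F]_(size s, m)) j :
  row j (diag_at F s z *m A) = (ple (lab j) z)%:R *: row j A.
Proof. by apply/rowP=> k; rewrite /diag_at mul_diag_mx !mxE. Qed.

Lemma diag_atM (s : seq S) z w : ple z w ->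
  diag_at F s z *m diag_at F s w = diag_at F s z.
Proof.
move=> lezw; apply/matrixP=> i j; rewrite /diag_at mul_mx_diag !mxE.
case: (eqVneq i j) => [->|_]; rewrite ?mulr0n ?mul0r ?mulr1n //.
by case lejz: (ple (lab j) z); rewrite ?(ple_trans lejz lezw) ?mulr1 ?mul0r.
Qed.

Lemma diag_at_id (s : seq S) z m (A : 'M[F]_(m, size s)) :
  (A <= diag_at F s z)%MS -> A *m diag_at F s z = A.
Proof. by case/submxP=> X ->; rewrite -mulmxA diag_atM ?ple_refl. Qed.

Lemma diag_atS (s : seq S) z w : ple z w -> (diag_at F s z <= diag_at F s w)%MS.
Proof. by move=> lezw; rewrite -(diag_atM s lezw) submxMl. Qed.

End DiagAt.

Section Augmentation.
Variables (S : finPoset) (M : pmod F S).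

Definition eps_of (s : seq S) (r : forall j : 'I_(size s), 'rV[F]_(pdim M (lab j)))
    (z : S) : 'M[F]_(size s, pdim M z) :=
  \matrix_(j, k) (if ple (lab j) z then (r j *m pmap M (lab j) z) ord0 k else 0).

Lemma eps_atE (E : presol M) z : eps_at E z = eps_of (reps (p:=E)) z.
Proof. by []. Qed.

Lemma row_eps_of s r z j : row j (@eps_of s r z) =
  if ple (lab j) z then r j *m pmap M (lab j) z else 0.
Proof. by apply/rowP=> k; rewrite !mxE; case: ple; rewrite ?mxE. Qed.

Lemma diag_at_eps_of s r z w : is_pmod M -> ple z w ->
  diag_at F s z *m @eps_of s r w = eps_of r z *m pmap M z w.
Proof.
move=> HM lezw; apply/row_matrixP=> j.
rewrite row_diag_atM row_mul !row_eps_of.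
case lejz: (ple (lab j) z); last by rewrite scale0r mul0mx.
by rewrite (ple_trans lejz lezw) scale1r -mulmxA -(HM.2 _ _ _ lejz lezw).
Qed.

End Augmentation.

Section FreeCover.
Variable Q : finPoset.

Definition cover_labels n : seq Q := [seq x.1 | x <- enum {: Q * 'I_n}].

Lemma size_cover_labels n : size (cover_labels n) = #|{: Q * 'I_n}|.
Proof. by rewrite size_map -cardE. Qed.

Definition cover_idx n (j : 'I_(size (cover_labels n))) : Q * 'I_n :=
  enum_val (cast_ord (size_cover_labels n) j).

Lemma lab_cover_idx n (j : 'I_(size (cover_labels n))) : lab j = (cover_idx j).1.
Proof.
have lt_j : (j < size (enum {: Q * 'I_n}))%N.
  by rewrite -cardE -(size_cover_labels n) ltn_ord.
rewrite /lab (tnth_nth (cover_idx j).1) /= (nth_map (cover_idx j)) //.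
by rewrite /cover_idx /enum_val /=; congr fst; exact: set_nth_default.
Qed.

Lemma cover_idx_surj n (x : Q * 'I_n) : exists j, cover_idx j = x.
Proof.
exists (cast_ord (esym (size_cover_labels n)) (enum_rank x)).
by rewrite /cover_idx cast_ordKV enum_rankK.
Qed.

(* The row space of [K z] is the value at [z] of a submodule of the projective
   module whose summands are labelled by [s]. *)
Definition is_subproj (s : seq Q) (K : Q -> 'M[F]_(size s)) :=
  (forall z w, ple z w -> (K z <= K w)%MS) /\ (forall z, (K z <= diag_at F s z)%MS).

Definition cover (s : seq Q) (K : Q -> 'M[F]_(size s)) :
    'M[F]_(size (cover_labels (size s)), size s) :=
  \matrix_(j, c) K (cover_idx j).1 (cover_idx j).2 c.

Definition ker_cover (s : seq Q) (K : Q -> 'M[F]_(size s)) (z : Q) :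
    'M[F]_(size (cover_labels (size s))) :=
  (diag_at F (cover_labels (size s)) z :&: kermx (cover K))%MS.

Lemma row_cover s K j : row j (@cover s K) = row (cover_idx j).2 (K (cover_idx j).1).
Proof. by apply/rowP=> c; rewrite !mxE. Qed.

Variables (s : seq Q) (K : Q -> 'M[F]_(size s)).
Hypothesis subK : is_subproj K.

Lemma cover_morph j c : cover K j c != 0 -> ple (lab c) (lab j).
Proof.
rewrite mxE -(diag_at_id (subK.2 _)) /diag_at mul_mx_diag !mxE lab_cover_idx.
by case: (ple (lab c) _); rewrite ?mulr0 ?eqxx.
Qed.

Lemma cover_image z : (diag_at F (cover_labels (size s)) z *m cover K == K z)%MS.
Proof.
apply/andP; split.
  apply/row_subP=> j; rewrite row_diag_atM row_cover lab_cover_idx.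
  case lejz: ple; last by rewrite scale0r sub0mx.
  by rewrite scale1r (submx_trans (row_sub _ _)) // subK.1.
apply/row_subP=> k; have [j idx_j] := cover_idx_surj (z, k).
suff -> : row k (K z) = row j (diag_at F (cover_labels (size s)) z *m cover K).
  exact: row_sub.
by rewrite row_diag_atM row_cover lab_cover_idx idx_j /= ple_refl scale1r.
Qed.

End FreeCover.

Lemma ker_cover_subproj (Q : finPoset) (s : seq Q) (K : Q -> 'M[F]_(size s)) :
  is_subproj (ker_cover K).
Proof.
split=> [z w lezw|z]; last exact: capmxSl.
by rewrite sub_capmx (submx_trans (capmxSl _ _) (diag_atS _ lezw)) capmxSr.
Qed.

Section FreeResolution.
Variables (Q : finPoset) (G : pmod F Q).
Hypothesis HG : is_pmod G.

(* E_0 is free on the pairs (z, k) with k < max dim G, the generator (z, k) going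
   to the k-th basis vector of G(z) (to 0 when k >= dim G(z)); E_(i+1) is free on
   the pairs (z, c), the generator (z, c) going to the c-th spanning row at z of
   the kernel of E_i -> E_(i-1).  No minimality is needed: distB ranges over all
   resolutions. *)
Definition gen_labels := cover_labels Q (\max_(z : Q) pdim G z).

Definition gen_vec (j : 'I_(size gen_labels)) : 'rV[F]_(pdim G (lab j)) :=
  \row_l ((l : nat) == (cover_idx j).2 :> nat)%:R.

Definition gen_ker (z : Q) := (diag_at F gen_labels z :&: kermx (eps_of gen_vec z))%MS.

Fixpoint res_stage i : {s : seq Q & Q -> 'M[F]_(size s)} :=
  if i is i'.+1 then existT _ _ (ker_cover (tagged (res_stage i')))
  else existT _ gen_labels gen_ker.

Definition free_res : presol G :=
  @PRes F Q G (fun i => tag (res_stage i)) (fun i => cover (tagged (res_stage i)))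
    gen_vec.

Lemma gen_ker_subproj : is_subproj gen_ker.
Proof.
split=> [z w lezw|z]; last exact: capmxSl.
rewrite sub_capmx (submx_trans (capmxSl _ _) (diag_atS _ lezw)) /=.
have diag_z : (gen_ker z <= diag_at F gen_labels z)%MS by exact: capmxSl.
have ker_z : gen_ker z *m eps_of gen_vec z = 0 by apply/sub_kermxP; exact: capmxSr.
apply/sub_kermxP.
by rewrite -(diag_at_id diag_z) -mulmxA diag_at_eps_of // mulmxA ker_z mul0mx.
Qed.

Lemma res_stage_subproj i : is_subproj (tagged (res_stage i)).
Proof. by case: i => [|i]; [exact: gen_ker_subproj | exact: ker_cover_subproj]. Qed.

Lemma eps_of_gen_full z : row_full (eps_of gen_vec z).
Proof.
rewrite -sub1mx; apply/row_subP=> k.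
have lt_k : (k < \max_(z : Q) pdim G z)%N.
  exact: leq_trans (ltn_ord k) (leq_bigmax_cond _ (isT : predT z)).
have [j idx_j] := cover_idx_surj (z, Ordinal lt_k).
have lab_j : lab j = z by rewrite lab_cover_idx idx_j.
have unit_row w (r : 'rV[F]_(pdim G w)) : w = z ->
    (forall l, r 0 l = ((l : nat) == k)%:R) -> r *m pmap G w z = row k 1%:M.
  by move=> ew r_k; subst w; rewrite HG.1 mulmx1; apply/rowP=> l; rewrite r_k !mxE eq_sym.
suff -> : row k 1%:M = row j (eps_of gen_vec z) by exact: row_sub.
rewrite row_eps_of (_ : ple (lab j) z) ?lab_j ?ple_refl //; symmetry.
apply: unit_row => // l.
by rewrite mxE idx_j.
Qed.

Lemma free_resP : is_resolution free_res.
Proof.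
split.
- by move=> i; exact: cover_morph (res_stage_subproj i).
- exact: eps_of_gen_full.
- by move=> z; exact: cover_image (res_stage_subproj 0) z.
- by move=> i z; exact: cover_image (res_stage_subproj i.+1) z.
Qed.

End FreeResolution.

Lemma lab_map (Q S : finPoset) (f : Q -> S) (s : seq Q) (e : size (map f s) = size s)
    (j : 'I_(size (map f s))) :
  lab j = f (lab (cast_ord e j)).
Proof.
pose x0 := tnth (in_tuple s) (cast_ord e j).
have lt_j : (j < size s)%N by rewrite -e ltn_ord.
rewrite /lab (tnth_nth (f x0)) /= (nth_map x0) //.
by rewrite [in RHS](tnth_nth x0).
Qed.

Section Transport.
Variables (Q S : finPoset) (G : pmod F Q) (M : pmod F S) (f : Q -> S) (g : S -> Q).
Hypotheses (HG : is_pmod G) (fg : galois_ins f g).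
Variables (phi : forall x : S, 'M[F]_(pdim G (g x), pdim M x))
          (psi : forall x : S, 'M[F]_(pdim M x, pdim G (g x))).
Hypotheses (phiK : forall x, phi x *m psi x = 1%:M) (psiK : forall x, psi x *m phi x = 1%:M)
  (phiM : forall x y, ple x y -> pmap G (g x) (g y) *m phi y = phi x *m pmap M x y).
Variable E : presol G.

Let cast_map i := size_map f (rE E i).

Definition transport_res : presol M :=
  @PRes F S M (fun i => map f (rE E i))
    (fun i => castmx (esym (cast_map i.+1), esym (cast_map i)) (rd E i))
    (fun j => reps (p:=E) (cast_ord (cast_map 0) j)
       *m pmap G (lab (cast_ord (cast_map 0) j)) (g (lab j)) *m phi (lab j)).

Lemma galois_adj u x : ple (f u) x = ple u (g x).
Proof. by case: fg. Qed.

Lemma diag_at_map (s : seq Q) z :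
  diag_at F (map f s) z =
  castmx (esym (size_map f s), esym (size_map f s)) (diag_at F s (g z)).
Proof.
apply/matrixP=> i j; rewrite castmxE /diag_at !mxE.
rewrite (lab_map (esym (esym (size_map f s))) i) galois_adj.
by rewrite (inj_eq (@cast_ord_inj _ _ _)).
Qed.

Lemma eps_at_transport z : eps_at transport_res z =
  castmx (esym (cast_map 0), erefl) (eps_at E (g z)) *m phi z.
Proof.
apply/row_matrixP=> j; rewrite row_mul row_castmx !eps_atE !row_eps_of.
have -> : cast_ord (esym (esym (cast_map 0))) j = cast_ord (cast_map 0) j.
  exact: val_inj.
set j0 := cast_ord (cast_map 0) j.
have lab_j : lab j = f (lab j0) by exact: lab_map.
have -> : ple (lab j) z = ple (lab j0) (g z) by rewrite lab_j galois_adj.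
case: ifP => [le_j0z|_]; last by rewrite mul0mx.
have le_j0 : ple (lab j0) (g (lab j)) by rewrite -galois_adj lab_j ple_refl.
have le_jz : ple (lab j) z by rewrite lab_j galois_adj.
have [_ mong _ _] := fg.
rewrite /= -/j0 -(mulmxA _ (phi _)) -phiM // mulmxA -(mulmxA (reps _)).
by rewrite -(HG.2 _ _ _ le_j0 (mong _ _ le_jz)).
Qed.

Lemma transport_resP : is_resolution E -> is_resolution transport_res.
Proof.
have free_phi z : row_free (phi z) by apply/row_freeP; exists (psi z).
have full_phi z : row_full (phi z) by apply/row_fullP; exists (psi z).
case=> Emorph Efull Eexact0 Eexact; split.
- move=> i j k; rewrite castmxE => /Emorph.
  rewrite (lab_map (esym (esym (cast_map i))) k) (lab_map (esym (esym (cast_map i.+1))) j).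
  by case: fg => monf _ _ _; exact: monf.
- move=> z; rewrite eps_at_transport /row_full eqmxMfull ?row_full_castmx //.
  exact: full_phi.
- move=> z; rewrite /= !diag_at_map eps_at_transport.
  rewrite !(cap_eqmx (eqmx_refl _) (kermxMfree _ (free_phi z))).
  exact: exact_castmx (Eexact0 (g z)).
- by move=> i z; rewrite /= !diag_at_map; exact: exact_castmx (Eexact i (g z)).
Qed.

End Transport.

End Resolutions.

Section Bottleneck.
Variables (F : fieldType) (R : realType).
Local Open Scope ereal_scope.

Section Distances.
Variables (S : finPoset) (d : S -> S -> \bar R) (M N : pmod F S).
Variables (E : presol M) (G : presol N).

Lemma distB_le_distR : is_resolution E -> is_resolution G ->
  (forall i, size (rE E i) = size (rE G i)) -> distB d M N <= distR d E G.
Proof. by move=> resE resG sizeEG; apply: ereal_inf_lbound; exists E, G. Qed.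

Lemma distR_le_cost (B : forall i, 'I_(size (rE E i)) -> 'I_(size (rE G i))) (e : \bar R) :
  is_matching B -> 0 <= e -> (forall i j, d (lab j) (lab (B i j)) <= e) ->
  distR d E G <= e.
Proof.
move=> matchB e_ge0 costB; apply: ge_ereal_inf; exists (matching_cost d B).
  by exists B.
by apply: ge_ereal_sup => _ [->|[i [j ->]]].
Qed.

End Distances.

Lemma distB_le_dGT (S : finPoset) (d : S -> S -> \bar R) (M N : pmod F S) :
  distB d M N <= dGT d M N.
Proof.
apply: le_dGT => Q f g h i G [fg hi HG [phi [psi [phiK psiK phiM]]]].
move=> [phi' [psi' [phiK' psiK' phiM']]].
set E := free_res G.
set EM := transport_res f phi E; set EN := transport_res h phi' E.
have size_EMN k : size (rE EM k) = size (rE EN k) by rewrite !size_map.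
have resEM : is_resolution EM := transport_resP HG fg phiK psiK phiM (free_resP HG).
have resEN : is_resolution EN := transport_resP HG hi phiK' psiK' phiM' (free_resP HG).
apply: le_trans (distB_le_distR d resEM resEN size_EMN) _.
apply: (distR_le_cost (B := fun k => cast_ord (size_EMN k))).
- split=> [k|k j' j].
    by exists (cast_ord (esym (size_EMN k))); [exact: cast_ordK | exact: cast_ordKV].
  by rewrite /= !castmxE; congr (rd E k _ _); exact: val_inj.
- exact: coupling_cost_ge0.
- move=> k j; rewrite (lab_map (size_map f (rE E k)) j).
  rewrite (lab_map (size_map h (rE E k)) (cast_ord _ j)).
  have -> : cast_ord (size_map h (rE E k)) (cast_ord (size_EMN k) j) =
            cast_ord (size_map f (rE E k)) j by exact: val_inj.
  exact: le_coupling_cost.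
Qed.

End Bottleneck.

Theorem theorem6p14 (R : realType) (F : fieldType) (P : finPoset)
    (d : P -> P -> \bar R)
    (d_fin : forall x y : P, d x y \is a fin_num)
    (d_metric : is_metric d)
    (M N : pmod F P) (HM : is_pmod M) (HN : is_pmod N) :
  (distB (int_d (aug_d d)) (kermod M) (kermod N)
     <= dGT (int_d (aug_d d)) (kermod M) (kermod N)
     <= dGT d M N)%E.
Proof.
apply/andP; split; first exact: distB_le_dGT.
rewrite !kermodE; apply: le_trans (dGT_aug_le d M N).
exact: dGT_kernel_le.
Qed.
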